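(* Let $\rho_{ABC}\in M_2(\mathbb{C})\otimes M_2(\mathbb{C})\otimes M_d(\mathbb{C})$ be a state with $\mathrm{rank}(\rho_{ABC})=2$. Let $\{M_{a|0}\}_{a=0}^1$ and $\{M_{a|1}\}_{a=0}^1$ be POVMs on subsystem $A$, and assume that for both $a\in\{0,1\}$ the operator $\rho_{a|0}=\mathrm{Tr}_A\big((M_{a|0}\otimes\mathbb{1}\otimes\mathbb{1})\rho_{ABC}\big)$ on $\mathbb{C}^2\otimes\mathbb{C}^d$ (systems $B,C$) has rank one and is (proportional to the projector onto) an entangled vector. Then there exist projective measurements $\{Q_{b|0}\}_{b=0}^1,\{Q_{b|1}\}_{b=0}^1$ on subsystem $B$ such that the assemblage $\Sigma=\{\sigma_{ab|xy}\}$, $\sigma_{ab|xy}=\mathrm{Tr}_{AB}\big((M_{a|x}\otimes Q_{b|y}\otimes\mathbb{1})\rho_{ABC}\big)$ ($a,b,x,y\in\{0,1\}$), is on the edge of the set of no-signaling assemblages.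
   Context: Scenario with two untrusted parties, binary outcomes $a,b\in\{0,1\}$ and binary settings $x,y\in\{0,1\}$, trusted system $\mathbb{C}^d$. A no-signaling assemblage is a collection of positive semidefinite operators $\sigma_{ab|xy}$ on $\mathbb{C}^d$ with $\sum_{a,b}\sigma_{ab|xy}=\rho$ independent of $x,y$ and of trace one, $\sum_b\sigma_{ab|xy}$ independent of $y$, and $\sum_a\sigma_{ab|xy}$ independent of $x$. An LHS assemblage is one of the form $\sigma_{ab|xy}=\sum_j q_j p_j(a|x)p'_j(b|y)\rho_j$ with probability weights $q_j$, density operators $\rho_j$ and conditional probability distributions $p_j,p'_j$. A no-signaling assemblage $\Sigma$ is on the edge if whenever $\Sigma=\epsilon\Sigma_1+(1-\epsilon)\Sigma_2$ with $\epsilon\in[0,1]$, $\Sigma_1$ LHS and $\Sigma_2$ no-signaling, necessarily $\epsilon=0$. *)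

(* Complex scalars: an arbitrary numClosedFieldType C
   (e.g. algC, or complex R for R real closed / R = the reals). *)
From mathcomp Require Import all_boot all_order all_algebra.
From mathcomp Require Export mxtens.
Set Implicit Arguments. Unset Strict Implicit. Unset Printing Implicit Defensive.
Import Order.TTheory GRing.Theory Num.Theory.
Local Open Scope ring_scope.

Section Q.
Variable C : numClosedFieldType.

Definition dagger m n (A : 'M[C]_(m, n)) : 'M[C]_(n, m) := map_mx Num.conj A^T.

Definition psd n (A : 'M[C]_n) : Prop :=
  A = dagger A /\ forall v : 'cV[C]_n, 0 <= (dagger v *m A *m v) 0 0.

Definition density n (A : 'M[C]_n) : Prop := psd A /\ \tr A = 1.

Definition povm n (E : 'I_2 -> 'M[C]_n) : Prop :=
  (forall a, psd (E a)) /\ \sum_(a < 2) E a = 1%:M.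

Definition projective_meas n (E : 'I_2 -> 'M[C]_n) : Prop :=
  povm E /\ forall a, E a *m E a = E a.

Definition ptrace1 m n (X : 'M[C]_(m * n)) : 'M[C]_n :=
  \matrix_(i, j) \sum_(k < m) X (mxtens_index (k, i)) (mxtens_index (k, j)).

Definition entangled m n (psi : 'cV[C]_(m * n)) : Prop :=
  ~ exists (u : 'cV[C]_m) (v : 'cV[C]_n), psi = u *t v.

(* assemblages: S a b x y = sigma_{ab|xy} *)
Definition assemblage d := 'I_2 -> 'I_2 -> 'I_2 -> 'I_2 -> 'M[C]_d.

Definition no_signaling d (S : assemblage d) : Prop :=
  (forall a b x y, psd (S a b x y)) /\
  (exists rho : 'M[C]_d, \tr rho = 1 /\
     forall x y, \sum_(a < 2) \sum_(b < 2) S a b x y = rho) /\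
  (forall a x y y', \sum_(b < 2) S a b x y = \sum_(b < 2) S a b x y') /\
  (forall b x x' y, \sum_(a < 2) S a b x y = \sum_(a < 2) S a b x' y).

(* conditional probability distribution p(a|x), written p a x *)
Definition cond_prob (p : 'I_2 -> 'I_2 -> C) : Prop :=
  (forall a x, 0 <= p a x) /\ forall x, \sum_(a < 2) p a x = 1.

Definition LHS d (S : assemblage d) : Prop :=
  exists (N : nat) (q : 'I_N -> C) (p p' : 'I_N -> 'I_2 -> 'I_2 -> C)
         (r : 'I_N -> 'M[C]_d),
    (forall j, 0 <= q j) /\ \sum_(j < N) q j = 1 /\
    (forall j, cond_prob (p j)) /\ (forall j, cond_prob (p' j)) /\
    (forall j, density (r j)) /\
    forall a b x y, S a b x y = \sum_(j < N) (q j * p j a x * p' j b y) *: r j.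

Definition on_edge d (S : assemblage d) : Prop :=
  no_signaling S /\
  forall (eps : C) (S1 S2 : assemblage d),
    0 <= eps <= 1 -> LHS S1 -> no_signaling S2 ->
    (forall a b x y, S a b x y = eps *: S1 a b x y + (1 - eps) *: S2 a b x y) ->
    eps = 0.

End Q.

(* Bob measures in the computational basis (y = 0) and in the Hadamard basis
   (y = 1).  Suppose Sigma = eps Sigma1 + (1 - eps) Sigma2
   with Sigma1 = sum_j q_j p_j(a|x) p'_j(b|y) rho_j local and eps > 0.  As
   rho_{a|0} = c |psi><psi|, each sigma_{ab|0y} is proportional to |w><w|,
   where w = (u^* (x) 1) psi is the slice of psi along the vector u on which
   Q_{b|y} projects.  A hidden state rho_j with q_j p_j(a|0) > 0 is dominated
   by sigma_{ab|0y} for some b with p'_j(b|y) > 0, for y = 0 and for y = 1,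
   so it vanishes on the orthogonal complements of two slices.  These slices
   are linearly independent because psi is entangled, so the two hyperplanes
   span the space and rho_j = 0, contradicting tr rho_j = 1.  Hence every q_j
   vanishes, contradicting sum_j q_j = 1. *)

From HB Require Import structures.
From mathcomp Require Import all_boot all_order all_algebra.
From mathcomp Require Import mxtens ring.
Import GRing.Theory Num.Theory.
Local Open Scope ring_scope.

Lemma big_mxtens (R : nmodType) m n (F : 'I_(m * n) -> R) :
  \sum_t F t = \sum_k \sum_l F (mxtens_index (k, l)).
Proof.
rewrite pair_big (reindex (@mxtens_index m n)) /=; last first.
  by exists (@mxtens_unindex m n) => t _; rewrite (mxtens_indexK, mxtens_unindexK).
by apply: eq_bigr => -[].
Qed.

Lemma sum_mulr_delta (R : pzSemiRingType) n (i : 'I_n) (F : 'I_n -> R) :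
  \sum_j F j * (j == i)%:R = F i.
Proof.
rewrite (bigD1 i) //= eqxx mulr1 big1 ?addr0 // => j /negbTE ->.
by rewrite mulr0.
Qed.

Lemma big_ord2 (R : nmodType) (F : 'I_2 -> R) : \sum_i F i = F 0 + F 1.
Proof.
by rewrite !big_ord_recl big_ord0 addr0; congr (F _ + F _); apply: val_inj.
Qed.

Lemma ord2_cases (k : 'I_2) : k = 0 \/ k = 1.
Proof. by case: k => -[|[|//]] k_lt; [left | right]; apply: val_inj. Qed.

Section Steering.
Variable C : numClosedFieldType.
Implicit Types (m n d : nat).
Set Implicit Arguments. Unset Strict Implicit. Unset Printing Implicit Defensive.

Section Positivity.

Lemma daggerK m n (A : 'M[C]_(m, n)) : dagger (dagger A) = A.
Proof. by apply/matrixP => i j; rewrite !mxE conjCK. Qed.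

Lemma dagger_mul m n p (A : 'M[C]_(m, n)) (B : 'M[C]_(n, p)) :
  dagger (A *m B) = dagger B *m dagger A.
Proof. by rewrite /dagger trmx_mul map_mxM. Qed.

Lemma daggerD m n (A B : 'M[C]_(m, n)) : dagger (A + B) = dagger A + dagger B.
Proof. by rewrite /dagger linearD map_mxD. Qed.

Lemma daggerB m n (A B : 'M[C]_(m, n)) : dagger (A - B) = dagger A - dagger B.
Proof. by rewrite /dagger linearB map_mxB. Qed.

Lemma daggerZ m n k (A : 'M[C]_(m, n)) : dagger (k *: A) = k^* *: dagger A.
Proof. by rewrite /dagger linearZ map_mxZ. Qed.

Lemma dagger_delta m n (i : 'I_m) (j : 'I_n) :
  dagger (delta_mx i j : 'M[C]_(m, n)) = delta_mx j i.
Proof. by apply/matrixP => k l; rewrite !mxE conjC_nat andbC. Qed.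

Lemma dnorm_dagger n (v : 'cV[C]_n) : dotmx (dagger v) (dagger v) = (dagger v *m v) 0 0.
Proof. by rewrite dotmxE /dagger trmxCK. Qed.

Lemma dagger_mulmx_ge0 n (v : 'cV[C]_n) : 0 <= (dagger v *m v) 0 0.
Proof. by rewrite -dnorm_dagger dnorm_ge0. Qed.

Lemma dagger_mulmx_eq0 n (v : 'cV[C]_n) : (dagger v *m v) 0 0 = 0 -> v = 0.
Proof.
move/eqP; rewrite -dnorm_dagger dnorm_eq0 => /eqP /(congr1 (@dagger C 1 n)).
by rewrite daggerK => ->; apply/matrixP => i j; rewrite !mxE conjC0.
Qed.

Lemma psd0 n : psd (0 : 'M[C]_n).
Proof.
split; first by apply/matrixP => i j; rewrite !mxE conjC0.
by move=> v; rewrite mulmx0 mul0mx mxE.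
Qed.

Lemma psd1 n : psd (1%:M : 'M[C]_n).
Proof.
split; first by apply/matrixP => i j; rewrite !mxE conjC_nat eq_sym.
by move=> v; rewrite mulmx1 dagger_mulmx_ge0.
Qed.

Lemma psdD n (A B : 'M[C]_n) : psd A -> psd B -> psd (A + B).
Proof.
move=> [hA qA] [hB qB]; split; first by rewrite daggerD -hA -hB.
by move=> v; rewrite mulmxDr mulmxDl mxE addr_ge0.
Qed.

Lemma psd_sum n I (r : seq I) (P : pred I) (F : I -> 'M[C]_n) :
  (forall i, P i -> psd (F i)) -> psd (\sum_(i <- r | P i) F i).
Proof. by move=> psdF; apply: big_ind => //; [exact: psd0 | exact: psdD]. Qed.

Lemma psdZ n k (A : 'M[C]_n) : 0 <= k -> psd A -> psd (k *: A).
Proof.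
move=> k_ge0 [hA qA]; split; first by rewrite daggerZ geC0_conj // -hA.
by move=> v; rewrite -scalemxAr -scalemxAl mxE mulr_ge0.
Qed.

Lemma psd_congr m n (P : 'M[C]_(m, n)) (X : 'M[C]_m) :
  psd X -> psd (dagger P *m X *m P).
Proof.
move=> [hX qX]; split; first by rewrite !dagger_mul daggerK -hX mulmxA.
by move=> v; rewrite -!mulmxA mulmxA -dagger_mul mulmxA qX.
Qed.

Lemma psd_rank1 n (c : 'cV[C]_n) : psd (c *m dagger c).
Proof. by have := psd_congr (dagger c) (psd1 1); rewrite daggerK mulmx1. Qed.

Lemma psd_sum_rank1 n (A : 'M[C]_n) : psd A ->
  exists (lam : 'I_n -> C) (c : 'I_n -> 'cV[C]_n),
    (forall i, 0 <= lam i) /\ A = \sum_i lam i *: (c i *m dagger (c i)).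
Proof.
move=> [hA qA].
have /hermitian_normalmx/orthomx_spectralP : A \is hermsymmx.
  by apply/is_hermitianmxP; rewrite expr0 scale1r.
rewrite invmx_unitary ?spectral_unitarymx //.
set P := spectralmx A; set D := spectral_diag A => A_eq.
have {}A_eq : A = dagger P *m diag_mx D *m P by [].
have PPt : P *m dagger P = 1%:M by apply/unitarymxP; exact: spectral_unitarymx.
pose c (i : 'I_n) : 'cV[C]_n := dagger P *m delta_mx i 0.
have c_rank1 i : c i *m dagger (c i) = dagger P *m delta_mx i i *m P.
  by rewrite dagger_mul daggerK dagger_delta mulmxA -[_ *m delta_mx 0 i]mulmxA mul_delta_mx.
exists (fun i => D 0 i), c; split.
  move=> i; have := qA (c i).
  have -> : dagger (c i) *m A *m c i = delta_mx 0 i *m diag_mx D *m delta_mx i 0.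
    rewrite dagger_mul daggerK dagger_delta A_eq !mulmxA -[_ *m P *m dagger P]mulmxA PPt.
    by rewrite mulmx1 -[_ *m P *m dagger P]mulmxA PPt mulmx1.
  by rewrite -mulmxA -colE -rowE !mxE eqxx mulr1n.
rewrite {1}A_eq diag_mx_sum_delta mulmx_sumr mulmx_suml; apply: eq_bigr => i _.
by rewrite c_rank1 -scalemxAr -scalemxAl.
Qed.

Lemma psd_mulmx_eq0 n (A : 'M[C]_n) (v : 'cV[C]_n) :
  psd A -> (dagger v *m A *m v) 0 0 = 0 -> A *m v = 0.
Proof.
move=> /psd_sum_rank1 [lam [c [lam_ge0 ->]]].
pose s i : C := (dagger (c i) *m v) 0 0.
have term i :
    (dagger v *m (lam i *: (c i *m dagger (c i))) *m v) 0 0 = lam i * (s i * (s i)^*).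
  rewrite -scalemxAr -scalemxAl mxE.
  have -> : dagger v *m (c i *m dagger (c i)) *m v =
            dagger (dagger (c i) *m v) *m (dagger (c i) *m v).
    by rewrite dagger_mul daggerK !mulmxA.
  by rewrite /s !mxE big_ord1 !mxE [_^* * _]mulrC.
have term_ge0 i : true -> 0 <= lam i * (s i * (s i)^*).
  by move=> _; apply: mulr_ge0; [exact: lam_ge0 | exact: mul_conjC_ge0].
rewrite mulmx_sumr mulmx_suml summxE; under eq_bigr do rewrite term.
move=> /(psumr_eq0P term_ge0) term_eq0; rewrite mulmx_suml big1 // => i _.
have /eqP := term_eq0 i isT; rewrite mulf_eq0 mul_conjC_eq0.
rewrite -scalemxAl -mulmxA [dagger _ *m v]mx11_scalar -/(s i) mul_mx_scalar scalerA.
by case/orP => /eqP ->; rewrite ?mulr0 ?mul0r scale0r.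
Qed.

Lemma psd_addl_mulmx_eq0 n (A B : 'M[C]_n) (v : 'cV[C]_n) :
  psd A -> psd B -> (dagger v *m (A + B) *m v) 0 0 = 0 -> A *m v = 0.
Proof.
move=> pA pB; rewrite mulmxDr mulmxDl mxE => /eqP.
rewrite paddr_eq0 ?pA.2 ?pB.2 // => /andP[/eqP Av0 _].
exact: psd_mulmx_eq0.
Qed.

Lemma rank1_form_eq0 n (s : C) (w v : 'cV[C]_n) :
  dagger w *m v = 0 -> (dagger v *m (s *: (w *m dagger w)) *m v) 0 0 = 0.
Proof.
by move=> wv0; rewrite -scalemxAr -scalemxAl !mulmxA -[_ *m v]mulmxA wv0 mulmx0 scaler0 mxE.
Qed.

Lemma rank1_proj_idem n (k : C) (u : 'cV[C]_n) :
  k * (dagger u *m u) 0 0 = 1 ->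
  (k *: (u *m dagger u)) *m (k *: (u *m dagger u)) = k *: (u *m dagger u).
Proof.
move=> norm1; rewrite -scalemxAl -scalemxAr scalerA mulmxA -(mulmxA u).
by rewrite [dagger u *m u]mx11_scalar mul_mx_scalar -scalemxAl scalerA -mulrA norm1 mulr1.
Qed.

Lemma mulmx_eq0_all m n (r : 'M[C]_(m, n)) : (forall v : 'cV_n, r *m v = 0) -> r = 0.
Proof.
move=> r_v; apply/matrixP => i j.
by have /matrixP/(_ i 0) := r_v (delta_mx j 0); rewrite -colE !mxE.
Qed.

Lemma ortho_kernels_eq0 m n (r : 'M[C]_(m, n)) (w w' : 'cV[C]_n) :
  (forall mu, w != mu *: w') ->
  (forall v : 'cV_n, dagger w *m v = 0 -> r *m v = 0) ->
  (forall v : 'cV_n, dagger w' *m v = 0 -> r *m v = 0) -> r = 0.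
Proof.
move=> w_indep r_w r_w'; apply: mulmx_eq0_all => z.
have [w'0|w'_neq0] := eqVneq w' 0.
  by apply: r_w'; rewrite w'0 /dagger trmx0 map_mx0 mul0mx.
(* [u] is the component of [w] orthogonal to [w'], and [z] splits as
   [(z - t u) + t u] with [z - t u] orthogonal to [w]. *)
pose a := (dagger w' *m w') 0 0; pose b := (dagger w' *m w) 0 0.
have a_neq0 : a != 0 by apply: contraNneq w'_neq0 => /dagger_mulmx_eq0 ->.
pose u := a *: w - b *: w'.
have u_w' : dagger w' *m u = 0.
  rewrite mulmxBr -!scalemxAr [dagger w' *m w]mx11_scalar [dagger w' *m w']mx11_scalar.
  by rewrite !scale_scalar_mx -/a -/b mulrC subrr.
pose g := (dagger w *m u) 0 0.
have g_neq0 : g != 0.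
  apply: contra_neq (w_indep (b / a)) => g0; apply: (scalerI a_neq0).
  rewrite scalerA mulrC divfK //; apply/eqP; rewrite -subr_eq0; apply/eqP/dagger_mulmx_eq0.
  by rewrite -/u daggerB !daggerZ mulmxBl -!scalemxAl u_w' scaler0 subr0 mxE -/g g0 mulr0.
pose t := (dagger w *m z) 0 0 / g.
have -> : z = (z - t *: u) + t *: u by rewrite subrK.
rewrite mulmxDr r_w ?r_w' ?add0r //; first by rewrite -scalemxAr u_w' scaler0.
rewrite mulmxBr -scalemxAr [dagger w *m z]mx11_scalar [dagger w *m u]mx11_scalar -/g.
by rewrite scale_scalar_mx divfK // subrr.
Qed.

End Positivity.

Section PartialTrace.

Lemma ptrace1E m n (Y : 'M[C]_(m * n)) i j :
  ptrace1 Y i j = \sum_k Y (mxtens_index (k, i)) (mxtens_index (k, j)).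
Proof. exact: mxE. Qed.

Lemma ptrace1_is_linear m n : linear (@ptrace1 C m n).
Proof.
move=> k X Y; apply/matrixP => i j.
by rewrite !mxE big_distrr -big_split; apply: eq_bigr => l _; rewrite !mxE.
Qed.

HB.instance Definition _ m n :=
  GRing.isLinear.Build C 'M[C]_(m * n) 'M[C]_n _ (@ptrace1 C m n) (@ptrace1_is_linear m n).

Lemma mxtrace_ptrace1 m n (Y : 'M[C]_(m * n)) : \tr (ptrace1 Y) = \tr Y.
Proof.
rewrite /mxtrace big_mxtens exchange_big; apply: eq_bigr => i _.
by rewrite ptrace1E.
Qed.

Lemma tensmx_suml m n p q I (r : seq I) (P : pred I) (A : I -> 'M[C]_(m, n))
    (B : 'M[C]_(p, q)) :
  (\sum_(i <- r | P i) A i) *t B = \sum_(i <- r | P i) (A i *t B).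
Proof.
apply/matrixP => s t; rewrite summxE !mxE summxE mulr_suml.
by apply: eq_bigr => i _; rewrite mxE.
Qed.

Lemma tensmxZl m n p q k (A : 'M[C]_(m, n)) (B : 'M[C]_(p, q)) :
  (k *: A) *t B = k *: (A *t B).
Proof. by apply/matrixP => s t; rewrite !mxE mulrA. Qed.

Lemma tensmx11 m n : (1%:M : 'M[C]_m) *t (1%:M : 'M[C]_n) = 1%:M.
Proof.
apply/matrixP => s t.
case: (mxtens_indexP s) => i j; case: (mxtens_indexP t) => k l.
by rewrite tensmxE !mxE (can_eq (@mxtens_indexK m n)) xpair_eqE -natrM mulnb.
Qed.

Lemma tensmx1_mulE m n p (A : 'M[C]_m) (Y : 'M[C]_(m * n, p)) k i t :
  ((A *t 1%:M) *m Y) (mxtens_index (k, i)) t =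
  \sum_k' A k k' * Y (mxtens_index (k', i)) t.
Proof.
rewrite mxE big_mxtens; apply: eq_bigr => k' _.
under eq_bigr do rewrite tensmxE mxE mulrAC eq_sym.
by rewrite sum_mulr_delta.
Qed.

Lemma tens1mx_mulE m n p (Z : 'M[C]_n) (Y : 'M[C]_(m * n, p)) k i t :
  ((1%:M *t Z) *m Y) (mxtens_index (k, i)) t =
  \sum_i' Z i i' * Y (mxtens_index (k, i')) t.
Proof.
rewrite mxE big_mxtens (bigD1 k) //= [X in _ + X]big1 ?addr0 => [|k' /negbTE k'k].
  by apply: eq_bigr => i' _; rewrite tensmxE mxE eqxx mul1r.
by apply: big1 => i' _; rewrite tensmxE mxE eq_sym k'k !mul0r.
Qed.

Lemma ptrace1_tens1_mull m n (Z : 'M[C]_n) (W : 'M[C]_(m * n)) :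
  ptrace1 ((1%:M *t Z) *m W) = Z *m ptrace1 W.
Proof.
apply/matrixP => i j; rewrite ptrace1E mxE.
under eq_bigr do rewrite tens1mx_mulE.
rewrite exchange_big; apply: eq_bigr => i' _.
by rewrite ptrace1E mulr_sumr.
Qed.

(* [tensl n u] is the isometry [v |-> u *t v], i.e. [u *t 1%:M] read as an
   [(m * n) x n] matrix (the matrix [u *t 1%:M] itself is [(m * n) x (1 * n)]). *)
Definition tensl m n (u : 'cV[C]_m) : 'M[C]_(m * n, n) :=
  \matrix_(t, j) (u (mxtens_unindex t).1 0 * ((mxtens_unindex t).2 == j)%:R).

Lemma tensl_is_linear m n : linear (@tensl m n).
Proof. by move=> k u v; apply/matrixP => s j; rewrite !mxE mulrDl mulrA. Qed.

HB.instance Definition _ m n :=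
  GRing.isLinear.Build C 'cV[C]_m 'M[C]_(m * n, n) _ (@tensl m n) (@tensl_is_linear m n).

Lemma tenslE m n (u : 'cV[C]_m) k i j :
  tensl n u (mxtens_index (k, i)) j = u k 0 * (i == j)%:R.
Proof. by rewrite mxE mxtens_indexK. Qed.

Lemma mul_tenslE m n p (Z : 'M[C]_(p, m * n)) (u : 'cV[C]_m) s j :
  (Z *m tensl n u) s j = \sum_k Z s (mxtens_index (k, j)) * u k 0.
Proof.
rewrite mxE big_mxtens; apply: eq_bigr => k _.
under eq_bigr do rewrite tenslE mulrA.
by rewrite sum_mulr_delta.
Qed.

Lemma dagger_tensl_mulE m n p (x : 'cV[C]_m) (Z : 'M[C]_(m * n, p)) i t :
  (dagger (tensl n x) *m Z) i t = \sum_k (x k 0)^* * Z (mxtens_index (k, i)) t.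
Proof.
rewrite mxE big_mxtens; apply: eq_bigr => k _.
under eq_bigr do rewrite !mxE mxtens_indexK rmorphM /= conjC_nat mulrAC.
by rewrite sum_mulr_delta.
Qed.

Lemma ptrace1_tens_rank1 m n (u x : 'cV[C]_m) (Y : 'M[C]_(m * n)) :
  ptrace1 (((u *m dagger x) *t 1%:M) *m Y) = dagger (tensl n x) *m Y *m tensl n u.
Proof.
apply/matrixP => i j; rewrite ptrace1E mul_tenslE; apply: eq_bigr => k _.
rewrite tensmx1_mulE dagger_tensl_mulE mulr_suml; apply: eq_bigr => k' _.
by rewrite !mxE big_ord1 !mxE [RHS]mulrC mulrA.
Qed.

Lemma psd_ptrace1_tens m n (A : 'M[C]_m) (X : 'M[C]_(m * n)) :
  psd A -> psd X -> psd (ptrace1 ((A *t 1%:M) *m X)).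
Proof.
move=> /psd_sum_rank1 [lam [c [lam_ge0 ->]]] psdX.
rewrite tensmx_suml mulmx_suml linear_sum; apply: psd_sum => i _.
rewrite tensmxZl -scalemxAl linearZ /=; apply: psdZ => //.
by rewrite ptrace1_tens_rank1; apply: psd_congr.
Qed.

End PartialTrace.

Section ConditionalStates.

Definition cond_state m n d (A : 'M[C]_m) (B : 'M[C]_n) (X : 'M[C]_(m * (n * d))) :
  'M[C]_d := ptrace1 (ptrace1 ((A *t (B *t 1%:M)) *m X)).

Lemma cond_stateE m n d (A : 'M[C]_m) (B : 'M[C]_n) (X : 'M[C]_(m * (n * d))) :
  cond_state A B X = ptrace1 ((B *t 1%:M) *m ptrace1 ((A *t 1%:M) *m X)).
Proof.
by rewrite /cond_state (tensmx_decl A (B *t 1%:M)) -mulmxA ptrace1_tens1_mull.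
Qed.

Lemma psd_cond_state m n d (A : 'M[C]_m) (B : 'M[C]_n) (X : 'M[C]_(m * (n * d))) :
  psd A -> psd B -> psd X -> psd (cond_state A B X).
Proof.
move=> pA pB pX; rewrite cond_stateE.
by apply: psd_ptrace1_tens => //; apply: psd_ptrace1_tens.
Qed.

Lemma cond_state_suml m n d I (r : seq I) (P : pred I) (A : I -> 'M[C]_m)
    (B : 'M[C]_n) (X : 'M[C]_(m * (n * d))) :
  \sum_(i <- r | P i) cond_state (A i) B X = cond_state (\sum_(i <- r | P i) A i) B X.
Proof.
rewrite cond_stateE tensmx_suml mulmx_suml !linear_sum.
by apply: eq_bigr => i _; rewrite cond_stateE.
Qed.

Lemma cond_state_sumr m n d I (r : seq I) (P : pred I) (A : 'M[C]_m)
    (B : I -> 'M[C]_n) (X : 'M[C]_(m * (n * d))) :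
  \sum_(i <- r | P i) cond_state A (B i) X = cond_state A (\sum_(i <- r | P i) B i) X.
Proof.
rewrite cond_stateE tensmx_suml mulmx_suml linear_sum.
by apply: eq_bigr => i _; rewrite cond_stateE.
Qed.

Lemma mxtrace_cond_state11 m n d (X : 'M[C]_(m * (n * d))) :
  \tr (cond_state 1%:M 1%:M X) = \tr X.
Proof. by rewrite cond_stateE !tensmx11 !mul1mx !mxtrace_ptrace1. Qed.

Lemma no_signaling_cond_state m n d (X : 'M[C]_(m * (n * d)))
    (M : 'I_2 -> 'I_2 -> 'M[C]_m) (Q : 'I_2 -> 'I_2 -> 'M[C]_n) :
  density X -> (forall x, povm (fun a => M a x)) -> (forall y, povm (fun b => Q b y)) ->
  no_signaling (fun a b x y => cond_state (M a x) (Q b y) X).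
Proof.
move=> [psdX trX] povmM povmQ; split; [|split; [|split]].
- move=> a b x y; apply: psd_cond_state => //; [exact: (povmM x).1 | exact: (povmQ y).1].
- exists (cond_state 1%:M 1%:M X); split; first by rewrite mxtrace_cond_state11.
  move=> x y; under eq_bigr do rewrite cond_state_sumr (povmQ y).2.
  by rewrite cond_state_suml (povmM x).2.
- by move=> a x y y'; rewrite !cond_state_sumr (povmQ y).2 (povmQ y').2.
- by move=> b x x' y; rewrite !cond_state_suml (povmM x).2 (povmM x').2.
Qed.

Lemma cond_state_rank1 m n d (A : 'M[C]_m) (X : 'M[C]_(m * (n * d)))
    (psi : 'cV[C]_(n * d)) (c k : C) (u : 'cV[C]_n) :
  ptrace1 ((A *t 1%:M) *m X) = c *: (psi *m dagger psi) ->
  cond_state A (k *: (u *m dagger u)) X =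
  (k * c) *: ((dagger (tensl d u) *m psi) *m dagger (dagger (tensl d u) *m psi)).
Proof.
rewrite cond_stateE => ->; rewrite tensmxZl -scalemxAl -scalemxAr !linearZ /=.
by rewrite ptrace1_tens_rank1 scalerA dagger_mul daggerK !mulmxA.
Qed.

End ConditionalStates.

Section Entanglement.

(* A vanishing slice [a psi_0 + b psi_1 = 0] makes [psi = (b, -a) *t v]. *)
Lemma entangled_slice_neq0 d (psi : 'cV[C]_(2 * d)) (z : 'cV[C]_2) :
  entangled psi -> z != 0 -> dagger (tensl d z) *m psi != 0.
Proof.
move=> ent z_neq0; apply/eqP => slice0; apply: ent.
pose a := (z 0 0)^*; pose b := (z 1 0)^*.
pose x i := psi (mxtens_index (0, i)) 0; pose y i := psi (mxtens_index (1, i)) 0.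
have rel i : a * x i + b * y i = 0.
  by have /matrixP/(_ i 0) := slice0; rewrite dagger_tensl_mulE big_ord2 mxE.
suff [v v_eq] : exists v : 'cV[C]_d, forall i, x i = b * v i 0 /\ y i = - a * v i 0.
  exists (\col_k (if k == 0 then b else - a)), v.
  apply/matrixP => s l; case: (mxtens_indexP s) => k i.
  rewrite [l]ord1 !mxE mxtens_indexK /=; case: (v_eq i) => xv yv.
  case: (ord2_cases k) => -> /=; rewrite [Ordinal _]ord1.
    by rewrite -/(x i) xv.
  by rewrite -/(y i) yv.
have [b0|b_neq0] := eqVneq b 0.
  have a_neq0 : a != 0.
    apply: contraNneq z_neq0 => a0; apply/eqP/matrixP => k l; rewrite [l]ord1 mxE.
    case: (ord2_cases k) => ->; apply/eqP; rewrite -conjC_eq0.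
      by rewrite -/a a0.
    by rewrite -/b b0.
  exists (- a^-1 *: \col_i y i) => i; rewrite !mxE b0 mul0r; split.
    by have := rel i; rewrite b0 mul0r addr0 => /eqP; rewrite mulf_eq0 (negbTE a_neq0) => /eqP.
  by rewrite mulrA mulrNN mulfV // mul1r.
exists (b^-1 *: \col_i x i) => i; rewrite !mxE mulrA mulfV // mul1r; split=> //.
apply: (mulfI b_neq0); rewrite mulrCA mulVKf // mulNr.
by apply/eqP; rewrite -addr_eq0 addrC rel.
Qed.

Lemma entangled_slices_indep d (psi : 'cV[C]_(2 * d)) (z z' : 'cV[C]_2) :
  entangled psi -> (forall mu, z != mu *: z') ->
  forall mu, dagger (tensl d z) *m psi != mu *: (dagger (tensl d z') *m psi).
Proof.
move=> ent z_indep mu; rewrite -subr_eq0.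
have -> : dagger (tensl d z) *m psi - mu *: (dagger (tensl d z') *m psi) =
          dagger (tensl d (z - mu^* *: z')) *m psi.
  by rewrite [in RHS]linearB [in RHS]linearZ /= daggerB daggerZ conjCK mulmxBl -scalemxAl.
by apply: entangled_slice_neq0; rewrite // subr_eq0.
Qed.

End Entanglement.

Section Edge.

Lemma cond_prob_neq0 (p : 'I_2 -> 'I_2 -> C) x : cond_prob p -> exists a, p a x != 0.
Proof.
move=> [_ p_sum]; case: (pickP (fun a => p a x != 0)) => [a pa|p0]; first by exists a.
have := p_sum x; rewrite big1 => [|a _]; last by apply/eqP; rewrite -[_ == _]negbK p0.
by move/eqP; rewrite eq_sym oner_eq0.
Qed.

Lemma lhs_hidden_state_kernel d N eps (q : 'I_N -> C) (p p' : 'I_N -> 'I_2 -> 'I_2 -> C)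
    (r : 'I_N -> 'M[C]_d) (S S1 S2 : assemblage C d) :
  eps != 0 -> 0 <= eps <= 1 -> (forall j, 0 <= q j) ->
  (forall j, cond_prob (p j)) -> (forall j, cond_prob (p' j)) ->
  (forall j, density (r j)) -> no_signaling S2 ->
  (forall a b x y, S1 a b x y = \sum_j (q j * p j a x * p' j b y) *: r j) ->
  (forall a b x y, S a b x y = eps *: S1 a b x y + (1 - eps) *: S2 a b x y) ->
  forall j a b x y (v : 'cV[C]_d), q j * p j a x * p' j b y != 0 ->
  (dagger v *m S a b x y *m v) 0 0 = 0 -> r j *m v = 0.
Proof.
move=> eps_neq0 /andP[eps_ge0 eps_le1] q_ge0 p_cp p'_cp r_dens [S2_psd _] S1E S_eq.
move=> j a b x y v coef_neq0.
have coef_ge0 i : 0 <= q i * p i a x * p' i b y.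
  by rewrite !mulr_ge0 ?q_ge0 ?(p_cp i).1 ?(p'_cp i).1.
rewrite S_eq S1E (bigD1 j) //= scalerDr -addrA scalerA => /psd_addl_mulmx_eq0 Av0.
have /eqP : (eps * (q j * p j a x * p' j b y)) *: r j *m v = 0.
  apply: Av0; first by apply: psdZ; [exact: mulr_ge0 | exact: (r_dens j).1].
  apply: psdD; apply: psdZ; rewrite ?subr_ge0 //.
  by apply: psd_sum => i _; apply: psdZ => //; exact: (r_dens i).1.
by rewrite -scalemxAl scaler_eq0 mulf_eq0 (negbTE eps_neq0) (negbTE coef_neq0) => /eqP.
Qed.

(* [Qmeas b 0] projects on the computational basis vector [b] and [Qmeas b 1] on
   the Hadamard basis vector [(1, (-1)^b) / sqrt 2]; the latter is stored
   unnormalized, with weight [1/2]. *)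
Definition Qvec (b y : 'I_2) : 'cV[C]_2 :=
  if y == 0 then delta_mx b 0 else \col_k (if (b == 1) && (k == 1) then -1 else 1).

Definition Qweight (y : 'I_2) : C := if y == 0 then 1 else 2^-1.

Definition Qmeas (b y : 'I_2) : 'M[C]_2 := Qweight y *: (Qvec b y *m dagger (Qvec b y)).

Lemma Qmeas_projective y : projective_meas (fun b => Qmeas b y).
Proof.
have weight_ge0 : 0 <= Qweight y.
  by rewrite /Qweight; case: ifP; rewrite ?invr_ge0 ?ler0n.
split; [split|].
- by move=> b; apply: psdZ => //; exact: psd_rank1.
- apply/matrixP => i j; rewrite big_ord2 !mxE !big_ord1 !mxE /Qvec /Qweight.
  case: (ord2_cases y) => -> /=; rewrite !mxE;
    case: (ord2_cases i) => ->; case: (ord2_cases j) => -> /=;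
    by rewrite ?rmorphN1 ?conjC1 ?conjC0; field.
- move=> b; apply: rank1_proj_idem; rewrite mxE big_ord2 !mxE /Qvec /Qweight.
  case: (ord2_cases y) => -> /=; rewrite !mxE; case: (ord2_cases b) => -> /=;
    by rewrite ?rmorphN1 ?conjC1 ?conjC0; field.
Qed.

Lemma Qvec_indep (b b' : 'I_2) mu : Qvec b 0 != mu *: Qvec b' 1.
Proof.
apply/negP => /eqP/matrixP E; have := E 0 0; have := E 1 0; rewrite !mxE /=.
case: (ord2_cases b) => -> /=; case: (ord2_cases b') => -> /= e1 /esym;
  rewrite mulr1 => mu_eq; move: e1; rewrite mu_eq ?mul0r ?mulr1 ?mulrN1 => /eqP;
  by rewrite ?(eq_sym 0) ?oppr_eq0 oner_eq0.
Qed.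

End Edge.

End Steering.

Theorem theorem4 (C : numClosedFieldType) (d : nat)
    (rho : 'M[C]_(2 * (2 * d))) (M : 'I_2 -> 'I_2 -> 'M[C]_2) :
  density rho ->
  (\rank rho = 2)%N ->
  (forall x, povm (fun a => M a x)) ->
  (forall a : 'I_2,
     let rho_a0 := ptrace1 (M a 0 *t (1%:M : 'M[C]_(2 * d)) *m rho) in
     (\rank rho_a0 = 1)%N /\
     exists psi : 'cV[C]_(2 * d),
       entangled psi /\ exists c : C, rho_a0 = c *: (psi *m dagger psi)) ->
  exists Q : 'I_2 -> 'I_2 -> 'M[C]_2,
    (forall y, projective_meas (fun b => Q b y)) /\
    on_edge (fun a b x y =>
      ptrace1 (ptrace1 ((M a x *t (Q b y *t (1%:M : 'M[C]_d))) *m rho))).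
Proof.
move=> rho_dens _ povmM rho_a0.
exists (Qmeas C); split; first exact: Qmeas_projective.
split; first by apply: no_signaling_cond_state => // y; exact: (Qmeas_projective C y).1.
move=> eps S1 S2 eps01 [N [q [p [p' [r [q_ge0 [q_sum [p_cp [p'_cp [r_dens S1E]]]]]]]]]].
move=> ns2 S_eq; have [//|eps_neq0] := eqVneq eps 0; exfalso.
have kernel := lhs_hidden_state_kernel eps_neq0 eps01 q_ge0 p_cp p'_cp r_dens ns2 S1E S_eq.
have r_eq0 j a : q j * p j a 0 != 0 -> r j = 0.
  move=> qp_neq0; have [_ [psi [ent [c rho_a0E]]]] := rho_a0 a.
  have slice_kernel y b : p' j b y != 0 -> forall v : 'cV[C]_d,
      dagger (dagger (tensl d (Qvec C b y)) *m psi) *m v = 0 -> r j *m v = 0.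
    move=> pb v wv0; apply: (kernel j a b 0 y v); first by rewrite mulf_neq0.
    rewrite -[ptrace1 _]/(cond_state (M a 0) (Qmeas C b y) rho).
    by rewrite /Qmeas (cond_state_rank1 _ _ rho_a0E) rank1_form_eq0.
  have [b0 pb0] := cond_prob_neq0 0 (p'_cp j); have [b1 pb1] := cond_prob_neq0 1 (p'_cp j).
  apply: ortho_kernels_eq0 (slice_kernel 0 b0 pb0) (slice_kernel 1 b1 pb1).
  exact: entangled_slices_indep ent (@Qvec_indep C b0 b1).
have q_eq0 j : q j = 0.
  rewrite -[q j]mulr1 -((p_cp j).2 0) mulr_sumr big1 // => a _.
  apply/eqP/negPn/negP => /r_eq0 rj0; have := (r_dens j).2.
  by rewrite rj0 mxtrace0 => /eqP; rewrite eq_sym oner_eq0.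
by move: q_sum; rewrite big1 // => /eqP; rewrite eq_sym oner_eq0.
Qed.
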